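(* Let $\mathcal{R}$ be a TRS, $s$ a total term, and $S$ a reduction strongly $p$-converging from $s$ to $t$. Then $S$ is total (all its terms and $t$ are total) iff no prefix of $S$ has a volatile position.
   Context: Total terms contain no $\bot$; partial terms are terms over $\Sigma_\bot=\Sigma\uplus\{\bot\}$ ordered by $\le_\bot$ (replacing subterms by $\bot$), a complete semilattice; $\liminf_{\iota\to\alpha}a_\iota=\bigvee_{\beta<\alpha}\bigwedge_{\beta\le\iota<\alpha}a_\iota$. A reduction $S=(t_\iota\to_{\pi_\iota}t_{\iota+1})_{\iota<\alpha}$ with contexts $c_\iota$ ($t_\iota$ with position $\pi_\iota$ replaced by $\bot$) strongly $p$-converges to $t$ if $\liminf_{\iota\to\lambda}c_\iota=t_\lambda$ for every limit $\lambda<\alpha$ and $t$ is the last term (closed) or $t=\liminf_{\iota\to\alpha}c_\iota$ (open). A position $\pi$ is volatile in an open reduction $(t_\iota\to_{\pi_\iota}t_{\iota+1})_{\iota<\lambda}$ if for every $\beta<\lambda$ there is $\beta\le\gamma<\lambda$ with $\pi_\gamma=\pi$; a prefix of $S$ is $S|_\beta=(t_\iota\to_{\pi_\iota}t_{\iota+1})_{\iota<\beta}$, $\beta\le\alpha$. *)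

From mathcomp Require Import all_boot.
Set Implicit Arguments. Unset Strict Implicit. Unset Printing Implicit Defensive.

Section Defs.

Variables (F V : Type) (ar : F -> nat).

Inductive symb : Type := Sym of F | Bot.

(* Positions are finite sequences of naturals (head = first step from root). *)
Definition pos := seq nat.

(* A (possibly infinite) partial term over Sigma_bot, given by its labelling *)
(* of positions: None = "not a position", Some (Sym f), Some Bot.            *)
Definition pt := pos -> option symb.

Definition wf (t : pt) : Prop :=
  t [::] <> None /\
  forall p i, t (rcons p i) <> None <-> exists2 f, t p = Some (Sym f) & i < ar f.

Definition total_term (t : pt) : Prop := forall p, t p <> Some Bot.

(* s <=_bot t : s is obtained from t by replacing subterms with bot, i.e.    *)
Definition le_bot (s t : pt) : Prop :=
  forall p, s p <> None -> s p <> Some Bot -> t p = s p.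

Definition is_glb (P : pt -> Prop) (g : pt) : Prop :=
  wf g /\ (forall x, P x -> le_bot g x) /\
  (forall h, wf h -> (forall x, P x -> le_bot h x) -> le_bot h g).

Definition is_lub (P : pt -> Prop) (g : pt) : Prop :=
  wf g /\ (forall x, P x -> le_bot x g) /\
  (forall h, wf h -> (forall x, P x -> le_bot x h) -> le_bot g h).

Definition repl (t : pt) (p : pos) (u : pt) : pt :=
  fun q => if prefix p q then u (drop (size p) q) else t q.

Definition botpt : pt := fun q => if q is [::] then Some Bot else None.

Definition ctx (t : pt) (p : pos) : pt := repl t p botpt.

Inductive fterm : Type := FVar of V | FApp of F & seq fterm.

Fixpoint fwf (l : fterm) : Prop :=
  match l with
  | FVar _ => True
  | FApp f ts => size ts = ar f /\
      (fix allwf (us : seq fterm) : Prop :=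
         match us with [::] => True | u :: us' => fwf u /\ allwf us' end) ts
  end.

Fixpoint occurs (x : V) (l : fterm) : Prop :=
  match l with
  | FVar y => x = y
  | FApp _ ts =>
      (fix exo (us : seq fterm) : Prop :=
         match us with [::] => False | u :: us' => occurs x u \/ exo us' end) ts
  end.

Fixpoint subst (l : fterm) (sigma : V -> pt) (p : pos) {struct p} : option symb :=
  match l with
  | FVar x => sigma x p
  | FApp f ts =>
      match p with
      | [::] => Some (Sym f)
      | i :: p' => if onth ts i is Some u then subst u sigma p' else None
      end
  end.

Definition rule := (fterm * fterm)%type.

Definition is_TRS (R : rule -> Prop) : Prop :=
  forall l r, R (l, r) ->
    fwf l /\ fwf r /\ (forall x, l <> FVar x) /\ (forall x, occurs x r -> occurs x l).

Definition rstep (R : rule -> Prop) (t : pt) (p : pos) (t' : pt) : Prop :=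
  exists l r (sigma : V -> pt),
    R (l, r) /\ (forall x, wf (sigma x)) /\
    (forall q, t (p ++ q) = subst l sigma q) /\
    (forall q, t' q = repl t p (subst r sigma) q).

(* Ordinals: elements of an arbitrary well-ordered type (O, olt).            *)
Variables (O : Type) (olt : O -> O -> Prop).

Definition well_order : Prop :=
  (forall a b c, olt a b -> olt b c -> olt a c) /\
  (forall a, ~ olt a a) /\
  (forall a b, olt a b \/ a = b \/ olt b a) /\
  well_founded olt.

Definition ole (a b : O) : Prop := olt a b \/ a = b.

Definition is_least (z : O) : Prop := forall a, ~ olt a z.

Definition is_succ (a b : O) : Prop := olt a b /\ forall c, olt a c -> ole b c.

Definition is_limit (l : O) : Prop :=
  (exists a, olt a l) /\ forall a, olt a l -> exists2 b, olt a b & olt b l.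

Definition is_liminf (a : O -> pt) (lam : O) (g : pt) : Prop :=
  exists b : O -> pt,
    (forall beta, olt beta lam ->
       is_glb (fun x => exists2 i, ole beta i /\ olt i lam & x = a i) (b beta)) /\
    is_lub (fun x => exists2 beta, olt beta lam & x = b beta) g.

Definition reduction (R : rule -> Prop) (z alpha : O) (t : O -> pt) (pi : O -> pos) : Prop :=
  is_least z /\
  (forall i, olt i alpha -> wf (t i)) /\
  (forall i j, olt i alpha -> is_succ i j -> rstep R (t i) (pi i) (t j)).

(* Strong p-convergence of S to u. Closed reductions (length a successor or  *)
(* 0) have last term t_alpha; open ones have limit length.                   *)
Definition strongly_pconverges (alpha : O) (t : O -> pt) (pi : O -> pos) (u : pt) : Prop :=
  wf u /\
  (forall lam, is_limit lam -> olt lam alpha ->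
     is_liminf (fun i => ctx (t i) (pi i)) lam (t lam)) /\
  (~ is_limit alpha -> u = t alpha) /\
  (is_limit alpha -> is_liminf (fun i => ctx (t i) (pi i)) alpha u).

Definition volatile (beta : O) (pi : O -> pos) (p : pos) : Prop :=
  is_limit beta /\
  forall b, olt b beta -> exists2 c, ole b c /\ olt c beta & pi c = p.

Definition total_reduction (alpha : O) (t : O -> pt) (u : pt) : Prop :=
  (forall i, olt i alpha -> total_term (t i)) /\ total_term u.

End Defs.

From mathcomp Require Import all_boot.
From Stdlib Require Import Classical.
Set Implicit Arguments. Unset Strict Implicit. Unset Printing Implicit Defensive.

(* Rewrite steps preserve totality, because the right-hand side of a rule only
   uses variables of its left-hand side; so bot can only enter a reduction at a
   limit ordinal lam.  If no position is volatile at lam, then for any position q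
   the finitely many prefixes of q are contracted only before some b0 < lam;
   from b0 on all terms, hence all contexts and their liminf, agree with the
   total term t_b0 along q, so the limit has no bot at q.  Conversely, if p is
   volatile at lam, let qs be the longest prefix of p present in the liminf g.
   A lower bound of a tail of contexts cannot carry a symbol at qs: the tail
   contracts at p, so that symbol would have a child towards p, which g lacks.
   Hence g is below g with qs cut to bot, i.e. g has bot at qs. *)

Lemma prefix_rcons_cases (p q : pos) j :
  prefix p (rcons q j) -> p = rcons q j \/ prefix p q.
Proof.
case/prefixP=> s; case/lastP: s => [|s k]; first by rewrite cats0 => ->; left.
by rewrite -rcons_cat => /rcons_inj [-> _]; right; apply: prefix_prefix.
Qed.

Lemma prefix_next (p q : pos) : prefix p q -> p != q ->
  exists j, prefix (rcons p j) q.
Proof.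
case/prefixP=> [[|j s] ->]; first by rewrite cats0 eqxx.
by exists j; rewrite -cat_rcons prefix_prefix.
Qed.

Lemma nprefix_prefix (p q r : pos) : ~~ prefix p q -> prefix r q -> ~~ prefix p r.
Proof. by move=> Hpq Hrq; apply: contra Hpq => /prefix_trans; apply. Qed.

Section PartialTerms.
Variables (F : Type) (ar : F -> nat).
Implicit Types (t u g x : pt F) (p q r : pos).

Lemma wf_rcons t q j : wf ar t -> t (rcons q j) <> None ->
  exists2 f, t q = Some (Sym f) & j < ar f.
Proof. by move=> [_ Ht] /Ht. Qed.

Lemma wf_prefix t q r : wf ar t -> prefix q r -> t r <> None -> t q <> None.
Proof.
move=> Ht /prefixP [s ->]; elim/last_ind: s => [|s j IH]; first by rewrite cats0.
by rewrite -rcons_cat => /(wf_rcons Ht) [f Hf _]; apply: IH; rewrite Hf.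
Qed.

Lemma wf_Sym_prefix t q r f : wf ar t -> prefix q r -> t r = Some (Sym f) ->
  exists f', t q = Some (Sym f').
Proof.
move=> Ht Hqr Hr; have [/eqP -> | Hne] := boolP (q == r); first by exists f.
have [j Hj] := prefix_next Hqr Hne.
have /(wf_rcons Ht) [f' Hf' _] : t (rcons q j) <> None by apply: wf_prefix Ht Hj _; rewrite Hr.
by exists f'.
Qed.

Lemma wf_child_defined t u q j : wf ar t -> wf ar u -> t q = u q ->
  t (rcons q j) <> None -> u (rcons q j) <> None.
Proof. by move=> [_ Ht] [_ Hu] Etu /Ht [f Hf Hj]; apply/Hu; exists f => //; rewrite -Etu. Qed.

Lemma total_Sym t q : total_term t -> t q <> None -> exists f, t q = Some (Sym f).
Proof. by move/(_ q); case: (t q) => [[f|]|] //; exists f. Qed.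

Lemma le_bot_trans t u g : le_bot t u -> le_bot u g -> le_bot t g.
Proof. by move=> Htu Hug q H1 H2; rewrite Hug Htu. Qed.

Lemma repl_off t p u q : ~~ prefix p q -> repl t p u q = t q.
Proof. by rewrite /repl => /negbTE ->. Qed.

Lemma wf_repl t p u : wf ar t -> wf ar u -> t p <> None -> wf ar (repl t p u).
Proof.
move=> [Ht0 Ht] [Hu0 Hu] Hp; split.
  by rewrite /repl; case: ifP => [|_ //]; rewrite prefixs0 => /eqP ->.
move=> q j; rewrite /repl; case: (boolP (prefix p q)) => Hpq.
  by rewrite (prefix_trans Hpq (prefix_rcons q j)) drop_rcons ?size_prefix.
case: ifP => [/prefix_rcons_cases [Ep|] | _]; last exact: Ht; last by rewrite (negbTE Hpq).
rewrite Ep drop_size; split=> // _; by apply/Ht; rewrite -Ep.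
Qed.

Lemma wf_botpt : wf ar (botpt F).
Proof. by split=> // q j; split=> [|[f]]; case: q. Qed.

Lemma wf_ctx t p : wf ar t -> t p <> None -> wf ar (ctx t p).
Proof. by move=> Ht Hp; apply: wf_repl Hp; last exact: wf_botpt. Qed.

Lemma ctx_self t p : ctx t p p = Some (Bot F).
Proof. by rewrite /ctx /repl prefix_refl drop_size. Qed.

Lemma ctx_Sym_nprefix t p q f : ctx t p q = Some (Sym f) -> ~~ prefix p q.
Proof. by rewrite /ctx /repl; case: ifP => // _; case: drop. Qed.

Lemma longest_defined_prefix t p : wf ar t -> exists qs,
  [/\ prefix qs p, t qs <> None & forall j, prefix (rcons qs j) p -> t (rcons qs j) = None].
Proof.
move=> Ht; elim/last_ind: p => [|p k [qs [Hqs Hdef Hmax]]].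
  by exists [::]; split=> //; case: Ht.
case E: (t (rcons p k)) => [a|].
  exists (rcons p k); rewrite E; split=> // [|j /size_prefix].
    exact: prefix_refl.
  by rewrite !size_rcons ltnn.
exists qs; split=> // [|j /prefix_rcons_cases [->|/Hmax] //].
exact: prefix_trans Hqs (prefix_rcons p k).
Qed.

(* [t] along the path [q]: the prefixes of [q] keep their labels, the other
   children of these prefixes become bot, everything else is cut away. *)
Definition spine t q : pt F := fun r =>
  if prefix r q then t r
  else if (0 < size r) && prefix (take (size r).-1 r) q then
    (if t r is Some _ then Some (Bot F) else None)
  else None.

Lemma wf_spine t q : wf ar t -> wf ar (spine t q).
Proof.
move=> [Ht0 Ht]; split; first by rewrite /spine prefix0s.
move=> p j; rewrite {1}/spine size_rcons /= -cats1 take_size_cat // cats1.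
have [Hjq|Hjq] := boolP (prefix (rcons p j) q).
  by rewrite /spine (prefix_trans (prefix_rcons p j) Hjq); exact: Ht.
have [Hpq|Hpq] := boolP (prefix p q).
  rewrite /spine Hpq; case E: (t (rcons p j)) => [a|].
    by split=> // _; apply/Ht; rewrite E.
  by split=> // /Ht; rewrite E.
split=> // [[f]]; rewrite /spine (negbTE Hpq).
by case: ifP => // _; case: (t p).
Qed.

Lemma le_bot_spine t q x : (forall r, prefix r q -> x r = t r) -> le_bot (spine t q) x.
Proof.
move=> Hx r; rewrite /spine; case: ifP => [Hr _ _|_]; first exact: Hx.
by case: ifP => // _; case: (t r).
Qed.

Lemma wf_agree_prefixes t g q : wf ar t -> total_term t -> wf ar g ->
  (forall r, prefix r q -> t r <> None -> g r = t r) ->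
  forall r, prefix r q -> g r = t r.
Proof.
move=> Ht Htot Hg Hdef; elim/last_ind => [|r j IH] Hrq.
  by apply: Hdef; case: Ht.
have Hr := prefix_trans (prefix_rcons r j) Hrq.
case E: (t (rcons r j)) => [a|]; first by rewrite -E; apply: Hdef; rewrite ?E.
case Eg: (g (rcons r j)) => [b|] //.
have : t (rcons r j) <> None by apply: (wf_child_defined Hg Ht (IH Hr)); rewrite Eg.
by rewrite E.
Qed.

End PartialTerms.

Section Rules.
Variables (F V : Type) (ar : F -> nat).
Implicit Types (l r : fterm F V) (sigma : V -> pt F).

Lemma fterm_ind_onth (P : fterm F V -> Prop) :
  (forall x, P (FVar F x)) ->
  (forall f ts, (forall i u, onth ts i = Some u -> P u) -> P (FApp f ts)) ->
  forall l, P l.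
Proof.
move=> Hvar Happ; fix IH 1 => -[x|f ts]; first exact: Hvar.
apply: Happ; move: ts; fix IHts 1 => -[|u ts] [|i] v /=; try discriminate.
  by case=> <-; exact: IH.
exact: IHts.
Qed.

Lemma occursE (x : V) (f : F) (ts : seq (fterm F V)) :
  occurs x (FApp f ts) <-> exists i u, onth ts i = Some u /\ occurs x u.
Proof.
elim: ts => [|u ts IH] /=; first by split=> // [[i [u []]]]; rewrite onth0n.
split=> [[Hu|/IH [i [v Hv]]]|[[|i] [v [/= Hv Hocc]]]].
- by exists 0, u.
- by exists i.+1, v.
- by left; case: Hv Hocc => ->.
- by right; apply/IH; exists i, v.
Qed.

Lemma occurs_subst sigma x l : occurs x l ->
  exists w, forall q, subst l sigma (w ++ q) = sigma x q.
Proof.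
elim/fterm_ind_onth: l => [y /= ->|f ts IH /occursE [i [u [Hu Hocc]]]].
  by exists [::] => -[].
have [w Hw] := IH i u Hu Hocc.
by exists (i :: w) => q /=; rewrite Hu.
Qed.

Lemma subst_Bot sigma q r : subst r sigma q = Some (Bot F) ->
  exists x q', occurs x r /\ sigma x q' = Some (Bot F).
Proof.
elim: q r => [|i q IH] [y|f ts] Hq; try by exists y, [::] + exists y, (i :: q).
  by [].
have [u [Hu /IH [x [q' [Hocc Hx]]]]] :
    exists u, onth ts i = Some u /\ subst u sigma q = Some (Bot F).
  by move: Hq => /=; case: (onth ts i) => [u|] // Hu; exists u.
by exists x, q'; split=> //; apply/occursE; exists i, u.
Qed.

Lemma rstep_off (R : rule F V -> Prop) (t t' : pt F) p q :
  rstep ar R t p t' -> ~~ prefix p q -> t' q = t q.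
Proof. by move=> [l [r [sigma [_ [_ [_ ->]]]]]] /repl_off ->. Qed.

Variable R : rule F V -> Prop.
Hypothesis HR : is_TRS ar R.

Lemma rstep_total t p t' : rstep ar R t p t' -> total_term t -> total_term t'.
Proof.
move=> [l [r [sigma [Hlr [_ [Hl Ht']]]]]] Ht q.
rewrite Ht' /repl; case: ifP => _; last exact: Ht.
move=> /subst_Bot [x [q' [Hr Hx]]].
have [_ [_ [_ Hvars]]] := HR Hlr.
have [w Hw] := occurs_subst sigma (Hvars x Hr).
by apply: (Ht (p ++ w ++ q')); rewrite Hl Hw.
Qed.

Lemma rstep_redex_defined t p t' : rstep ar R t p t' -> t p <> None.
Proof.
move=> [l [r [sigma [Hlr [_ [Hl _]]]]]].
have := Hl [::]; rewrite cats0 => ->.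
have [_ [_ [Hnvar _]]] := HR Hlr.
by case: l {Hl Hlr} Hnvar => [x /(_ x)|].
Qed.

End Rules.

Section Ordinals.
Variables (O : Type) (olt : O -> O -> Prop).
Hypothesis Hwo : well_order olt.
Implicit Types a b c i j : O.

Lemma olt_trans a b c : olt a b -> olt b c -> olt a c.
Proof. by case: Hwo => H _; apply: H. Qed.

Lemma olt_irr a : ~ olt a a.
Proof. by case: Hwo => _ []. Qed.

Lemma olt_trichotomy a b : olt a b \/ a = b \/ olt b a.
Proof. by case: Hwo => _ [_ []]. Qed.

Lemma olt_wf : well_founded olt.
Proof. by case: Hwo => _ [_ [_]]. Qed.

Lemma lt_ole_trans a b c : olt a b -> ole olt b c -> olt a c.
Proof. by move=> Hab [Hbc|<-] //; apply: olt_trans Hab Hbc. Qed.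

Lemma ole_trans a b c : ole olt a b -> ole olt b c -> ole olt a c.
Proof. by case=> [Hab|->] // Hbc; left; apply: lt_ole_trans Hab Hbc. Qed.

Lemma succ_exists i c : olt i c -> exists j, is_succ olt i j.
Proof.
move=> Hic; apply: NNPP => Hno.
elim/(well_founded_ind olt_wf): c Hic => c IH Hic.
apply: Hno; exists c; split=> // d Hid.
case: (olt_trichotomy c d) => [Hcd|[->|Hdc]]; [by left|by right|].
by case: (IH d Hdc Hid).
Qed.

Lemma ordinal_cases j : is_least olt j \/ (exists i, is_succ olt i j) \/ is_limit olt j.
Proof.
case: (classic (exists a, olt a j)) => [[a Haj]|Hnone]; last first.
  by left=> a Ha; apply: Hnone; exists a.
case: (classic (forall a, olt a j -> exists2 b, olt a b & olt b j)) => Hlim.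
  by right; right; split=> //; exists a.
right; left; have [i Hi] := not_all_ex_not _ _ Hlim.
have Hij : olt i j by apply: NNPP => Hn; apply: Hi => /Hn.
exists i; split=> // c Hic.
case: (olt_trichotomy c j) => [Hcj|[->|Hjc]]; [|by right|by left].
by case: Hi => _; exists c.
Qed.

Lemma least_unique a b : is_least olt a -> is_least olt b -> a = b.
Proof.
move=> Ha Hb; case: (olt_trichotomy a b) => [H|[//|H]]; first by case: (Hb _ H).
by case: (Ha _ H).
Qed.

Lemma succ_ole_pred i j b : is_succ olt i j -> olt b j -> ole olt b i.
Proof.
move=> [Hij Hs] Hbj; case: (olt_trichotomy b i) => [H|[->|H]]; [by left|by right|].
by case: (olt_irr (lt_ole_trans Hbj (Hs _ H))).
Qed.

Lemma succ_not_limit i j : is_succ olt i j -> ~ is_limit olt j.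
Proof.
move=> [Hij Hs] [_ Hl]; have [b Hib Hbj] := Hl _ Hij.
exact: olt_irr (lt_ole_trans Hbj (Hs _ Hib)).
Qed.

Lemma least_not_limit j : is_least olt j -> ~ is_limit olt j.
Proof. by move=> Hj [[a Ha] _]; apply: Hj Ha. Qed.

Definition eventually (lam : O) (P : O -> Prop) : Prop :=
  exists2 b, olt b lam & forall c, ole olt b c -> olt c lam -> P c.

Lemma eventually_and lam (P Q : O -> Prop) :
  eventually lam P -> eventually lam Q -> eventually lam (fun c => P c /\ Q c).
Proof.
move=> [b0 Hb0 HP] [b1 Hb1 HQ].
have [b [Hb0b Hb1b] Hb] : exists2 b, ole olt b0 b /\ ole olt b1 b & olt b lam.
  case: (olt_trichotomy b0 b1) => [H|[<-|H]].
  - by exists b1; [split; [left|right]|].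
  - by exists b0; [split; right|].
  - by exists b0; [split; [right|left]|].
exists b => // c Hbc Hc.
by split; [apply: HP | apply: HQ] => //; apply: ole_trans Hbc.
Qed.

End Ordinals.

Section Liminf.
Variables (F : Type) (ar : F -> nat) (O : Type) (olt : O -> O -> Prop).
Implicit Types (g h T : pt F) (c : O -> pt F).

Lemma liminf_wf c mu g : is_liminf ar olt c mu g -> wf ar g.
Proof. by case=> b [_ []]. Qed.

Lemma le_liminf c mu g b0 h : is_liminf ar olt c mu g -> olt b0 mu -> wf ar h ->
  (forall k, ole olt b0 k -> olt k mu -> le_bot h (c k)) -> le_bot h g.
Proof.
move=> [b [Hglb [_ [Hub _]]]] Hb0 Hh Hhc.
have [_ [_ Hmax]] := Hglb b0 Hb0.
apply: le_bot_trans (Hub _ (ex_intro2 _ _ b0 Hb0 erefl)).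
by apply: Hmax => // _ [k Hk ->]; apply: Hhc; case: Hk.
Qed.

Lemma liminf_le c mu g h : is_liminf ar olt c mu g -> wf ar h ->
  (forall b x, olt b mu -> wf ar x -> le_bot x g ->
     (forall k, ole olt b k -> olt k mu -> le_bot x (c k)) -> le_bot x h) ->
  le_bot g h.
Proof.
move=> [b [Hglb [_ [Hub Hmin]]]] Hh Hx.
apply: Hmin => // y [b0 Hb0 ->].
have [Hbwf [Hlow _]] := Hglb b0 Hb0.
apply: (Hx b0) => //; first by apply: Hub; exists b0.
by move=> k Hk Hkmu; apply: Hlow; exists k.
Qed.

Lemma liminf_agree c mu g b0 T q : wf ar T -> total_term T ->
  is_liminf ar olt c mu g -> olt b0 mu ->
  (forall k, ole olt b0 k -> olt k mu -> forall r, prefix r q -> c k r = T r) ->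
  forall r, prefix r q -> g r = T r.
Proof.
move=> HT Htot Hg Hb0 Hc.
have Hsg : le_bot (spine T q) g.
  apply: le_liminf Hg Hb0 (wf_spine q HT) _ => k Hk Hkmu.
  exact: le_bot_spine (Hc k Hk Hkmu).
apply: (wf_agree_prefixes HT Htot (liminf_wf Hg)) => r Hr Hdef.
have HTr : spine T q r = T r by rewrite /spine Hr.
by rewrite -HTr; apply: Hsg; rewrite HTr // (Htot r).
Qed.

Lemma liminf_volatile_not_total (t : O -> pt F) (pi : O -> pos) beta p g :
  (forall k, olt k beta -> wf ar (t k) /\ t k (pi k) <> None) ->
  (forall b, olt b beta -> exists2 k, ole olt b k /\ olt k beta & pi k = p) ->
  is_liminf ar olt (fun k => ctx (t k) (pi k)) beta g -> ~ total_term g.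
Proof.
move=> Hdef Hvol Hg Htot.
have Hgwf := liminf_wf Hg.
have [qs [Hqp Hgqs Hmax]] := longest_defined_prefix p Hgwf.
have [f Hf] := total_Sym Htot Hgqs.
suff Hle : le_bot g (ctx g qs).
  by have := Hle qs; rewrite ctx_self Hf => /(_ _ _) [] //.
apply: liminf_le Hg (wf_ctx Hgwf Hgqs) _ => b x Hb Hx Hxg Hxc r Hr1 Hr2.
case Hqr: (prefix qs r); last by rewrite /ctx repl_off ?Hqr // Hxg.
have [f' Hf'] : exists f', x qs = Some (Sym f').
  by case Exr: (x r) Hr1 Hr2 => [[f0|]|] // _ _; apply: wf_Sym_prefix Hx Hqr Exr.
have [k [Hbk Hkbeta] Hpk] := Hvol b Hb.
have [Htk Hpdef] := Hdef k Hkbeta; rewrite Hpk in Hpdef.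
have Hck : ctx (t k) p qs = Some (Sym f') by rewrite -Hpk -Hf'; apply: Hxc => //; rewrite Hf'.
have Hpqs := ctx_Sym_nprefix Hck.
have [j Hj] : exists j, prefix (rcons qs j) p.
  by apply: prefix_next Hqp _; apply: contra Hpqs => /eqP <-; apply: prefix_refl.
have Etg : t k qs = g qs by rewrite (Hxg qs) Hf' // -Hck /ctx repl_off.
by case: (wf_child_defined Htk Hgwf Etg (wf_prefix Htk Hj Hpdef)); apply: Hmax.
Qed.

End Liminf.

Section Reduction.
Variables (F V : Type) (ar : F -> nat) (R : rule F V -> Prop).
Variables (O : Type) (olt : O -> O -> Prop) (alpha : O) (t : O -> pt F) (pi : O -> pos).
Hypothesis Hwo : well_order olt.
Hypothesis Hwf : forall i, olt i alpha -> wf ar (t i).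
Hypothesis Hstep : forall i j, olt i alpha -> is_succ olt i j -> rstep ar R (t i) (pi i) (t j).
Hypothesis Hlim : forall lam, is_limit olt lam -> olt lam alpha ->
  is_liminf ar olt (fun i => ctx (t i) (pi i)) lam (t lam).
Hypothesis HR : is_TRS ar R.

Lemma redex_defined i : olt i alpha -> t i (pi i) <> None.
Proof.
move=> Hi; have [j Hj] := succ_exists Hwo Hi.
exact: (rstep_redex_defined HR (Hstep Hi Hj)).
Qed.

Lemma eventually_pi_neq lam p : is_limit olt lam -> ~ volatile olt lam pi p ->
  eventually olt lam (fun c => pi c <> p).
Proof.
move=> Hl Hnv; apply: NNPP => Hn; apply: Hnv; split=> // b Hb.
apply: NNPP => Hno; apply: Hn; exists b => // c Hbc Hc Hpc.
by apply: Hno; exists c.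
Qed.

Lemma eventually_pi_nprefix lam q : is_limit olt lam -> (forall p, ~ volatile olt lam pi p) ->
  eventually olt lam (fun c => ~~ prefix (pi c) q).
Proof.
move=> Hl Hnv; elim/last_ind: q => [|q j IH].
  have [b Hb Hne] := eventually_pi_neq Hl (Hnv [::]).
  by exists b => // c Hbc Hc; rewrite prefixs0; apply/eqP; apply: Hne.
have [b Hb Hboth] := eventually_and Hwo IH (eventually_pi_neq Hl (Hnv (rcons q j))).
exists b => // c Hbc Hc; have [Hq Hne] := Hboth c Hbc Hc.
by apply/negP => /prefix_rcons_cases [//|]; apply/negP.
Qed.

Lemma agree_while_no_step_at_prefix lam b0 q :
  ole olt lam alpha -> olt b0 lam -> total_term (t b0) ->
  (forall c, ole olt b0 c -> olt c lam -> ~~ prefix (pi c) q) ->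
  forall j, ole olt b0 j -> olt j lam -> forall r, prefix r q -> t j r = t b0 r.
Proof.
move=> Hla Hb0 Htot Hnp j.
elim/(well_founded_ind (olt_wf Hwo)): j => j IH [Hb0j|<- //] Hjl r Hr.
have Hja := lt_ole_trans Hwo Hjl Hla.
case: (ordinal_cases Hwo j) => [Hz|[[i Hij]|Hl]].
- by case: (Hz _ Hb0j).
- have Hb0i := succ_ole_pred Hwo Hij Hb0j.
  have Hil := olt_trans Hwo Hij.1 Hjl.
  rewrite (rstep_off (Hstep (olt_trans Hwo Hij.1 Hja) Hij) (nprefix_prefix (Hnp i Hb0i Hil) Hr)).
  exact: IH Hij.1 Hb0i Hil r Hr.
- apply: (liminf_agree (Hwf (olt_trans Hwo Hb0j Hja)) Htot (Hlim Hl Hja) Hb0j _ Hr).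
  move=> k Hk Hkj r' Hr'; have Hkl := olt_trans Hwo Hkj Hjl.
  rewrite /ctx (repl_off _ _ (nprefix_prefix (Hnp k Hk Hkl) Hr')).
  exact: IH Hkj Hk Hkl r' Hr'.
Qed.

Lemma liminf_total lam g : is_limit olt lam -> ole olt lam alpha ->
  (forall i, olt i lam -> total_term (t i)) ->
  (forall p, ~ volatile olt lam pi p) ->
  is_liminf ar olt (fun i => ctx (t i) (pi i)) lam g -> total_term g.
Proof.
move=> Hl Hla Htot Hnv Hg q.
have [b0 Hb0 Hnp] := eventually_pi_nprefix q Hl Hnv.
have Hb0a := lt_ole_trans Hwo Hb0 Hla.
have Hagree := agree_while_no_step_at_prefix Hla Hb0 (Htot _ Hb0) Hnp.
rewrite (liminf_agree (Hwf Hb0a) (Htot _ Hb0) Hg Hb0 _ (prefix_refl q)); first exact: Htot.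
move=> k Hk Hkl r Hr; rewrite /ctx (repl_off _ _ (nprefix_prefix (Hnp k Hk Hkl) Hr)).
exact: Hagree.
Qed.

Lemma terms_total z : is_least olt z -> total_term (t z) ->
  (forall lam p, ole olt lam alpha -> ~ volatile olt lam pi p) ->
  forall i, olt i alpha -> total_term (t i).
Proof.
move=> Hz Htz Hnv i; elim/(well_founded_ind (olt_wf Hwo)): i => i IH Hia.
case: (ordinal_cases Hwo i) => [Hi|[[k Hk]|Hl]].
- by rewrite (least_unique Hwo Hi Hz).
- have Hka := olt_trans Hwo Hk.1 Hia.
  exact (rstep_total HR (Hstep Hka Hk) (IH _ Hk.1 Hka)).
- apply: (liminf_total Hl (or_introl Hia) _ (fun p => Hnv i p (or_introl Hia)) (Hlim Hl Hia)).
  by move=> k Hk; apply: IH Hk (olt_trans Hwo Hk Hia).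
Qed.

End Reduction.

Theorem lemma3p15 (F V : Type) (ar : F -> nat) (R : rule F V -> Prop)
  (HR : is_TRS ar R)
  (O : Type) (olt : O -> O -> Prop) (Hwo : well_order olt)
  (z alpha : O) (t : O -> pt F) (pi : O -> pos) (s u : pt F)
  (HS : reduction ar olt R z alpha t pi)
  (Hs : t z = s) (Hst : total_term s)
  (Hconv : strongly_pconverges ar olt alpha t pi u) :
  total_reduction olt alpha t u <->
  ~ (exists beta p, ole olt beta alpha /\ volatile olt beta pi p).
Proof.
move: HS Hconv => [Hz [Hwf Hstep]] [_ [Hlim [Hclosed Hopen]]].
split.
- move=> [Htot Htu] [beta [p [Hba [Hl Hvol]]]].
  have Hdef k : olt k beta -> wf ar (t k) /\ t k (pi k) <> None.
    move=> Hk; have Hka := lt_ole_trans Hwo Hk Hba.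
    by split; [apply: Hwf | exact (redex_defined Hwo Hstep HR Hka)].
  case: Hba => [Hba|Eba]; last subst beta.
    exact: liminf_volatile_not_total Hdef Hvol (Hlim _ Hl Hba) (Htot _ Hba).
  exact: liminf_volatile_not_total Hdef Hvol (Hopen Hl) Htu.
- move=> Hnv.
  have Hnv' lam p : ole olt lam alpha -> ~ volatile olt lam pi p.
    by move=> Hla Hv; apply: Hnv; exists lam, p.
  have Htz : total_term (t z) by rewrite Hs.
  have Htot := terms_total Hwo Hwf Hstep Hlim HR Hz Htz Hnv'.
  split=> //; case: (ordinal_cases Hwo alpha) => [Ha|[[k Hk]|Hl]].
  + by rewrite (Hclosed (least_not_limit Ha)) (least_unique Hwo Ha Hz).
  + rewrite (Hclosed (succ_not_limit Hwo Hk)).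
    exact (rstep_total HR (Hstep _ _ Hk.1 Hk) (Htot _ Hk.1)).
  + exact (liminf_total Hwo Hwf Hstep Hlim Hl (or_intror erefl) Htot
      (fun p => Hnv' alpha p (or_intror erefl)) (Hopen Hl)).
Qed.
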